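(* Let $\mathbb{H}=\{x+iy:y>0\}$ and let $\varphi:\mathbb{H}\to\mathbb{C}$ be holomorphic with $\varphi'$ nonvanishing and $$\sup_{x+iy\in\mathbb{H}} y\left|\frac{\varphi''(x+iy)}{\varphi'(x+iy)}\right|<\frac12.$$ For $\alpha>0$ let $L_\alpha=\{x+iy\in\mathbb{H}: y|\varphi'(x+iy)|=\alpha\}$. Then $L_\alpha$ is the graph $\{x+if_\alpha(x):x\in\mathbb{R}\}$ of a Lipschitz function $f_\alpha:\mathbb{R}\to(0,\infty)$. *)

From Stdlib Require Import Reals.
Open Scope R_scope.

Definition Cx : Type := (R * R)%type.
Definition Re (z : Cx) : R := fst z.
Definition Im (z : Cx) : R := snd z.
Definition Cadd (z w : Cx) : Cx := (Re z + Re w, Im z + Im w).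
Definition Csub (z w : Cx) : Cx := (Re z - Re w, Im z - Im w).
Definition Cmul (z w : Cx) : Cx :=
  (Re z * Re w - Im z * Im w, Re z * Im w + Im z * Re w).
Definition Cinv (z : Cx) : Cx :=
  (Re z / (Re z ^ 2 + Im z ^ 2), - Im z / (Re z ^ 2 + Im z ^ 2)).
Definition Cdiv (z w : Cx) : Cx := Cmul z (Cinv w).
Definition Cmod (z : Cx) : R := sqrt (Re z ^ 2 + Im z ^ 2).
Definition C0 : Cx := (0, 0).

Definition in_H (z : Cx) : Prop := 0 < Im z.

Definition has_cderiv (f : Cx -> Cx) (z d : Cx) : Prop :=
  forall eps : R, 0 < eps -> exists delta : R, 0 < delta /\
    forall h : Cx, h <> C0 -> Cmod h < delta ->
      Cmod (Csub (Cdiv (Csub (f (Cadd z h)) (f z)) h) d) < eps.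

Definition Lipschitz (f : R -> R) : Prop :=
  exists K : R, forall x y : R, Rabs (f x - f y) <= K * Rabs (x - y).

From Stdlib Require Import Reals Ranalysis5 Lra Psatz ClassicalEpsilon.
Open Scope R_scope.

(* Write N = |phi'|^2. Along a segment s |-> p(s) = (x0 + s a, y0 + s b) in H
   the derivative of y^n N is y^(n-1) (n b N + 2 y <phi', phi'' w>), w = (a, b),
   and the hypothesis y |phi''/phi'| <= M < 1/2 bounds 2 y |<phi', phi'' w>|
   by 2 M |w| N < |w| N. So y^n N strictly increases whenever |w| <= n b
   ([weighted_increasing]). Three instances give the whole theorem:
   - n = 1, w = (0, 1): y N increases, which pins the energy E = y^2 N between
     multiples of y and, with continuity and the IVT, shows every value c > 0
     is attained on each vertical line;
   - n = 2, w = (0, 1): E is strictly increasing in y, so that value is unique;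
   - n = 2, w = (a, |a|): E(x1, y) <= E(x2, y + |x2 - x1|), which makes the
     resulting graph 1-Lipschitz.
   Since y |phi'| = alpha iff E = alpha^2, the level set L_alpha is the graph. *)

Definition Cnorm2 (z : Cx) : R := Re z ^ 2 + Im z ^ 2.

Definition cdot (z w : Cx) : R := Re z * Re w + Im z * Im w.

Lemma Cnorm2_nonneg z : 0 <= Cnorm2 z.
Proof. unfold Cnorm2; nra. Qed.

Lemma Cnorm2_pos z : z <> C0 -> 0 < Cnorm2 z.
Proof.
  destruct z as [u v]; unfold Cnorm2, Re, Im; simpl; intro Hz.
  destruct (Req_dec u 0) as [-> | Hu].
  - destruct (Req_dec v 0) as [-> | Hv]; [now elim Hz | nra].
  - nra.
Qed.

Lemma Cmod_sqr z : Cmod z ^ 2 = Cnorm2 z.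
Proof. unfold Cmod; rewrite pow2_sqrt; [reflexivity | apply Cnorm2_nonneg]. Qed.

Lemma Cmod_pos z : z <> C0 -> 0 < Cmod z.
Proof. intro Hz; apply sqrt_lt_R0, Cnorm2_pos, Hz. Qed.

Lemma Rabs_Re_le z : Rabs (Re z) <= Cmod z.
Proof. unfold Cmod; rewrite <- sqrt_Rsqr_abs; apply sqrt_le_1_alt; unfold Rsqr; nra. Qed.

Lemma Rabs_Im_le z : Rabs (Im z) <= Cmod z.
Proof. unfold Cmod; rewrite <- sqrt_Rsqr_abs; apply sqrt_le_1_alt; unfold Rsqr; nra. Qed.

Lemma Cmod_mul z w : Cmod (Cmul z w) = Cmod z * Cmod w.
Proof.
  destruct z as [p q], w as [c d]; unfold Cmod, Cmul, Re, Im; simpl.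
  rewrite <- sqrt_mult by nra; f_equal; ring.
Qed.

Lemma Cmod_div_mul z w : w <> C0 -> Cmod (Cdiv z w) * Cmod w = Cmod z.
Proof.
  intro Hw; pose proof (Cnorm2_pos w Hw) as Hn.
  unfold Cdiv; rewrite Cmod_mul, Rmult_assoc, <- Cmod_mul.
  replace (Cmul (Cinv w) w) with ((1, 0) : Cx).
  - replace (Cmod (1, 0)) with 1; [ring |].
    unfold Cmod, Re, Im; cbn [fst snd].
    replace (1 ^ 2 + 0 ^ 2) with 1 by ring; symmetry; apply sqrt_1.
  - destruct w as [u v]; unfold Cnorm2, Cmul, Cinv, Re, Im in *; simpl in *.
    f_equal; field; lra.
Qed.

Lemma cdot_le z w : Rabs (cdot z w) <= Cmod z * Cmod w.
Proof.
  unfold Cmod; rewrite <- sqrt_mult by (apply Cnorm2_nonneg).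
  rewrite <- sqrt_Rsqr_abs; apply sqrt_le_1_alt.
  destruct z as [p q], w as [c d]; unfold cdot, Rsqr, Re, Im; simpl.
  pose proof (pow2_ge_0 (p * d - q * c)); nra.
Qed.

Definition line (x0 y0 a b s : R) : Cx := (x0 + s * a, y0 + s * b).

Lemma affine_deriv y0 b t : derivable_pt_lim (fun s => y0 + s * b) t b.
Proof.
  intros eps Heps; exists (mkposreal 1 Rlt_0_1); intros h Hh _; simpl.
  replace ((y0 + (t + h) * b - (y0 + t * b)) / h - b) with 0 by (field; exact Hh).
  rewrite Rabs_R0; exact Heps.
Qed.

Section LineDerivative.
Variables (f : Cx -> Cx) (x0 y0 a b t : R) (d : Cx).
Hypothesis Hw : (a, b) <> C0.
Hypothesis Hd : has_cderiv f (line x0 y0 a b t) d.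

(* Restricted to a line, a complex derivative d becomes the real derivative
   d * w of the C-valued map s |-> f (line s); both coordinates at once. *)
Lemma line_difference_quotient eps : 0 < eps ->
  exists delta, 0 < delta /\ forall h, h <> 0 -> Rabs h < delta ->
    Cmod (Csub ((Re (f (line x0 y0 a b (t + h))) - Re (f (line x0 y0 a b t))) / h,
                (Im (f (line x0 y0 a b (t + h))) - Im (f (line x0 y0 a b t))) / h)
               (Cmul d (a, b))) < eps.
Proof.
  intro Heps; set (z := line x0 y0 a b t).
  pose proof (Cmod_pos _ Hw) as Hwpos.
  destruct (Hd (eps / Cmod (a, b))) as [delta [Hdelta Hquot]].
  { apply Rdiv_lt_0_compat; lra. }
  exists (delta / Cmod (a, b)); split; [apply Rdiv_lt_0_compat; lra |].
  intros h Hh Hsmall.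
  assert (Hhw : (h * a, h * b) <> C0).
  { intro E; injection E as Ea Eb; apply Hw; unfold C0; f_equal; nra. }
  assert (Hmod : Cmod (h * a, h * b) = Rabs h * Cmod (a, b)).
  { replace (h * a, h * b) with (Cmul (h, 0) (a, b))
      by (unfold Cmul, Re, Im; simpl; f_equal; ring).
    rewrite Cmod_mul; f_equal; unfold Cmod, Re, Im; simpl.
    rewrite <- sqrt_Rsqr_abs; f_equal; unfold Rsqr; ring. }
  specialize (Hquot (h * a, h * b) Hhw).
  rewrite Hmod in Hquot.
  assert (Hlt : Rabs h * Cmod (a, b) < delta).
  { apply (Rmult_lt_compat_r (Cmod (a, b))) in Hsmall; [| lra].
    replace (delta / Cmod (a, b) * Cmod (a, b)) with delta in Hsmall by (field; lra).
    exact Hsmall. }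
  specialize (Hquot Hlt).
  replace (line x0 y0 a b (t + h)) with (Cadd z (h * a, h * b))
    by (unfold Cadd, z, line, Re, Im; simpl; f_equal; ring).
  replace (Csub _ _) with
    (Cmul (Csub (Cdiv (Csub (f (Cadd z (h * a, h * b))) (f z)) (h * a, h * b)) d) (a, b)).
  - rewrite Cmod_mul.
    apply (Rmult_lt_compat_r (Cmod (a, b))) in Hquot; [| lra].
    replace (eps / Cmod (a, b) * Cmod (a, b)) with eps in Hquot by (field; lra).
    exact Hquot.
  - pose proof (Cnorm2_pos _ Hhw) as Hn; unfold Cnorm2, Re, Im in Hn; simpl in Hn.
    destruct (f (Cadd z (h * a, h * b))) as [c1 c2], (f z) as [e1 e2], d as [p q].
    unfold Csub, Cdiv, Cmul, Cinv, Re, Im; simpl.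
    f_equal; field; lra.
Qed.

Lemma line_deriv_Re :
  derivable_pt_lim (fun s => Re (f (line x0 y0 a b s))) t (Re (Cmul d (a, b))).
Proof.
  intros eps Heps; destruct (line_difference_quotient eps Heps) as [delta [Hdelta H]].
  exists (mkposreal delta Hdelta); intros h Hh Hsmall.
  exact (Rle_lt_trans _ _ _ (Rabs_Re_le _) (H h Hh Hsmall)).
Qed.

Lemma line_deriv_Im :
  derivable_pt_lim (fun s => Im (f (line x0 y0 a b s))) t (Im (Cmul d (a, b))).
Proof.
  intros eps Heps; destruct (line_difference_quotient eps Heps) as [delta [Hdelta H]].
  exists (mkposreal delta Hdelta); intros h Hh Hsmall.
  exact (Rle_lt_trans _ _ _ (Rabs_Im_le _) (H h Hh Hsmall)).
Qed.

Lemma line_deriv_norm2 :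
  derivable_pt_lim (fun s => Cnorm2 (f (line x0 y0 a b s))) t
    (2 * cdot (f (line x0 y0 a b t)) (Cmul d (a, b))).
Proof.
  apply (derivable_pt_lim_ext
    (fun s => Re (f (line x0 y0 a b s)) * Re (f (line x0 y0 a b s))
            + Im (f (line x0 y0 a b s)) * Im (f (line x0 y0 a b s)))).
  { intro s; unfold Cnorm2; ring. }
  replace (2 * cdot _ _) with
    (Re (Cmul d (a, b)) * Re (f (line x0 y0 a b t)) + Re (f (line x0 y0 a b t)) * Re (Cmul d (a, b))
   + (Im (Cmul d (a, b)) * Im (f (line x0 y0 a b t)) + Im (f (line x0 y0 a b t)) * Im (Cmul d (a, b))))
    by (unfold cdot; ring).
  apply derivable_pt_lim_plus; apply derivable_pt_lim_mult;
    auto using line_deriv_Re, line_deriv_Im.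
Qed.

Lemma line_deriv_weighted (n : nat) :
  derivable_pt_lim (fun s => (y0 + s * b) ^ n * Cnorm2 (f (line x0 y0 a b s))) t
    (INR n * (y0 + t * b) ^ pred n * b * Cnorm2 (f (line x0 y0 a b t))
     + (y0 + t * b) ^ n * (2 * cdot (f (line x0 y0 a b t)) (Cmul d (a, b)))).
Proof.
  apply derivable_pt_lim_mult; [| exact line_deriv_norm2].
  apply (derivable_pt_lim_comp (fun s => y0 + s * b) (fun y => y ^ n)).
  - apply affine_deriv.
  - apply derivable_pt_lim_pow.
Qed.
End LineDerivative.

Lemma line_vertical x s : line x 0 0 1 s = (x, s).
Proof. unfold line; f_equal; ring. Qed.

Lemma Cmod_vertical : Cmod (0, 1) = 1.
Proof.
  unfold Cmod, Re, Im; cbn [fst snd].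
  replace (0 ^ 2 + 1 ^ 2) with 1 by ring; apply sqrt_1.
Qed.

Lemma Cmod_diagonal a : Cmod (a, Rabs a) <= 2 * Rabs a.
Proof.
  unfold Cmod, Re, Im; simpl.
  rewrite <- (sqrt_Rsqr (2 * Rabs a)) by (pose proof (Rabs_pos a); lra).
  apply sqrt_le_1_alt; unfold Rsqr; pose proof (pow2_abs a); simpl in *; nra.
Qed.

Section LevelCurves.
Variables (phi1 phi2 : Cx -> Cx) (M : R).
Hypothesis Hphi1 : forall z, in_H z -> has_cderiv phi1 z (phi2 z).
Hypothesis Hnz : forall z, in_H z -> phi1 z <> C0.
Hypothesis HM : forall z, in_H z -> Im z * Cmod (Cdiv (phi2 z) (phi1 z)) <= M.
Hypothesis HM_half : M < 1 / 2.

Lemma slope_bound z w : in_H z ->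
  Im z * Rabs (cdot (phi1 z) (Cmul (phi2 z) w)) <= M * Cnorm2 (phi1 z) * Cmod w.
Proof.
  intro Hz; pose proof (Cmod_pos _ (Hnz z Hz)) as Hphi1_pos.
  assert (Hratio : Im z * Cmod (phi2 z) <= M * Cmod (phi1 z)).
  { rewrite <- (Cmod_div_mul (phi2 z) (phi1 z) (Hnz z Hz)), <- Rmult_assoc.
    apply Rmult_le_compat_r; [lra | exact (HM z Hz)]. }
  pose proof (cdot_le (phi1 z) (Cmul (phi2 z) w)) as HCS; rewrite Cmod_mul in HCS.
  pose proof (sqrt_pos (Cnorm2 w)).
  rewrite <- Cmod_sqr; unfold in_H in Hz; fold (Cmod w) in *.
  apply Rle_trans with (Cmod (phi1 z) * (Im z * Cmod (phi2 z)) * Cmod w).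
  - replace (Cmod (phi1 z) * (Im z * Cmod (phi2 z)) * Cmod w)
      with (Im z * (Cmod (phi1 z) * (Cmod (phi2 z) * Cmod w))) by ring.
    apply Rmult_le_compat_l; lra.
  - replace (M * Cmod (phi1 z) ^ 2 * Cmod w)
      with (Cmod (phi1 z) * (M * Cmod (phi1 z)) * Cmod w) by ring.
    apply Rmult_le_compat_r; [exact (sqrt_pos _) |].
    apply Rmult_le_compat_l; lra.
Qed.

Definition weighted (n : nat) (x0 y0 a b s : R) : R :=
  (y0 + s * b) ^ n * Cnorm2 (phi1 (line x0 y0 a b s)).

Definition weighted_slope (n : nat) (x0 y0 a b c : R) : R :=
  let p := line x0 y0 a b c in
  INR n * (y0 + c * b) ^ pred n * b * Cnorm2 (phi1 p)
  + (y0 + c * b) ^ n * (2 * cdot (phi1 p) (Cmul (phi2 p) (a, b))).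

(* Along a direction w = (a, b) with |w| <= n b, the weight y^n wins against
   the variation of |phi'|^2: the derivative of [weighted n] is positive. *)
Lemma weighted_deriv_pos n x0 y0 a b c : (0 < n)%nat -> 0 < b ->
  Cmod (a, b) <= INR n * b -> 0 < y0 + c * b -> 0 < weighted_slope n x0 y0 a b c.
Proof.
  intros Hn Hb Hw Hy; unfold weighted_slope.
  set (p := line x0 y0 a b c).
  assert (Hp : in_H p) by exact Hy.
  pose proof (slope_bound p (a, b) Hp) as Hslope; change (Im p) with (y0 + c * b) in Hslope.
  pose proof (Cnorm2_pos _ (Hnz p Hp)) as HN.
  assert (Hwpos : 0 < Cmod (a, b)) by (apply Cmod_pos; intro E; injection E; lra).
  set (y := y0 + c * b) in *; set (N := Cnorm2 (phi1 p)) in *.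
  set (D := cdot (phi1 p) (Cmul (phi2 p) (a, b))) in *.
  destruct n as [| m]; [lia |]; simpl pred.
  assert (Hym : 0 < y ^ m) by (apply pow_lt; lra).
  assert (Hmain : 0 < INR (S m) * b * N + y * (2 * D)).
  { assert (HD : - D <= Rabs D) by (rewrite <- Rabs_Ropp; apply Rle_abs).
    assert (Hsmall : 2 * M * Cmod (a, b) < INR (S m) * b) by nra.
    assert (y * - D <= y * Rabs D) by (apply Rmult_le_compat_l; lra).
    nra. }
  replace ((y ^ S m) * (2 * D)) with (y ^ m * (y * (2 * D))) by (simpl; ring).
  nra.
Qed.

Lemma weighted_increasing n x0 y0 a b s1 s2 : (0 < n)%nat -> 0 < b ->
  Cmod (a, b) <= INR n * b -> 0 < y0 + s1 * b -> s1 < s2 ->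
  weighted n x0 y0 a b s1 < weighted n x0 y0 a b s2.
Proof.
  intros Hn Hb Hw Hy1 H12.
  assert (Hline : forall c, s1 <= c <= s2 -> 0 < y0 + c * b) by (intros; nra).
  assert (Hab : (a, b) <> C0) by (intro E; injection E; lra).
  destruct (MVT_cor2 (weighted n x0 y0 a b) (weighted_slope n x0 y0 a b) s1 s2 H12)
    as [c [Emvt Hc]].
  - intros c Hc; unfold weighted.
    apply line_deriv_weighted; [exact Hab | apply Hphi1; exact (Hline c Hc)].
  - pose proof (weighted_deriv_pos n x0 y0 a b c Hn Hb Hw (Hline c ltac:(lra))).
    nra.
Qed.

Definition energy (x y : R) : R := y ^ 2 * Cnorm2 (phi1 (x, y)).

Lemma energy_height x y : energy x y = (y * Cmod (phi1 (x, y))) ^ 2.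
Proof. unfold energy; rewrite Rpow_mult_distr, Cmod_sqr; reflexivity. Qed.

Lemma weighted_vertical n x s : weighted n x 0 0 1 s = s ^ n * Cnorm2 (phi1 (x, s)).
Proof. unfold weighted; rewrite line_vertical; f_equal; f_equal; ring. Qed.

Lemma vertical_increasing n x y1 y2 : (0 < n)%nat -> 0 < y1 < y2 ->
  y1 ^ n * Cnorm2 (phi1 (x, y1)) < y2 ^ n * Cnorm2 (phi1 (x, y2)).
Proof.
  intros Hn [Hy1 H12]; rewrite <- !weighted_vertical.
  apply weighted_increasing; try lra; [exact Hn |].
  rewrite Cmod_vertical, Rmult_1_r; apply (le_INR 1); exact Hn.
Qed.

(* Moving sideways by |x2 - x1| costs at most the same rise in height: the
   energy increases along the diagonal directions (a, |a|). *)
Lemma energy_cone x1 x2 y : 0 < y -> energy x1 y <= energy x2 (y + Rabs (x2 - x1)).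
Proof.
  intro Hy; destruct (Req_dec x2 x1) as [-> | Hne].
  { rewrite Rminus_diag, Rabs_R0, Rplus_0_r; lra. }
  set (a := x2 - x1).
  assert (Ha : 0 < Rabs a) by (apply Rabs_pos_lt; unfold a; lra).
  assert (E0 : energy x1 y = weighted 2 x1 y a (Rabs a) 0).
  { unfold energy, weighted, line; rewrite !Rmult_0_l, !Rplus_0_r; reflexivity. }
  assert (E1 : energy x2 (y + Rabs a) = weighted 2 x1 y a (Rabs a) 1).
  { unfold energy, weighted, line; rewrite !Rmult_1_l.
    replace (x1 + a) with x2 by (unfold a; ring); reflexivity. }
  rewrite E0, E1; left.
  apply weighted_increasing; try lra; [lia |].
  replace (INR 2) with 2 by (simpl; ring); apply Cmod_diagonal.
Qed.

Lemma energy_continuous x y : 0 < y -> continuity_pt (energy x) y.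
Proof.
  intro Hy; apply derivable_continuous_pt.
  exists (weighted_slope 2 x 0 0 1 y).
  apply (derivable_pt_lim_ext (weighted 2 x 0 0 1)).
  { intro s; rewrite weighted_vertical; reflexivity. }
  unfold weighted, weighted_slope; cbv zeta.
  apply line_deriv_weighted.
  - intro E; injection E; lra.
  - apply Hphi1; unfold in_H, line, Im; simpl; lra.
Qed.

(* Every positive value is attained by the energy on each vertical line:
   since y |phi'|^2 increases, the energy lies below y k for y <= 1 and above
   y k for y >= 1, where k = |phi'(x + i)|^2; conclude by continuity. *)
Lemma energy_level x c : 0 < c -> exists y, 0 < y /\ energy x y = c.
Proof.
  intro Hc; set (k := Cnorm2 (phi1 (x, 1))).
  assert (Hk : 0 < k) by (apply Cnorm2_pos, Hnz; unfold in_H, Im; simpl; lra).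
  assert (Hfirst : forall y, 0 < y -> energy x y = y * (y ^ 1 * Cnorm2 (phi1 (x, y))))
    by (intros; unfold energy; ring).
  assert (Hk1 : k = 1 ^ 1 * Cnorm2 (phi1 (x, 1))) by (unfold k; ring).
  assert (Hbelow : forall y, 0 < y <= 1 -> energy x y <= y * k).
  { intros y [Hy Hy1]; rewrite Hfirst, Hk1 by lra; apply Rmult_le_compat_l; [lra |].
    destruct Hy1 as [Hy1 | ->]; [left; apply vertical_increasing; [lia | lra] | right; reflexivity]. }
  assert (Habove : forall y, 1 <= y -> y * k <= energy x y).
  { intros y Hy1; rewrite Hfirst, Hk1 by lra; apply Rmult_le_compat_l; [lra |].
    destruct Hy1 as [Hy1 | <-]; [left; apply vertical_increasing; [lia | lra] | right; reflexivity]. }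
  set (lo := Rmin 1 (c / (2 * k))); set (hi := Rmax 1 (2 * c / k)).
  assert (Hlo : 0 < lo) by (apply Rmin_glb_lt; [lra | apply Rdiv_lt_0_compat; lra]).
  assert (Elo : energy x lo < c).
  { apply Rle_lt_trans with (lo * k); [apply Hbelow; split; [lra | apply Rmin_l] |].
    apply Rle_lt_trans with (c / (2 * k) * k); [apply Rmult_le_compat_r; [lra | apply Rmin_r] |].
    replace (c / (2 * k) * k) with (c / 2) by (field; lra); lra. }
  assert (Ehi : c < energy x hi).
  { apply Rlt_le_trans with (hi * k); [| apply Habove, Rmax_l].
    apply Rlt_le_trans with (2 * c / k * k); [replace (2 * c / k * k) with (2 * c) by (field; lra); lra |].
    apply Rmult_le_compat_r; [lra | apply Rmax_r]. }
  assert (Hlohi : lo < hi).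
  { assert (lo <= hi) by (apply Rle_trans with 1; [apply Rmin_l | apply Rmax_l]).
    destruct (Req_dec lo hi) as [E | E]; [rewrite E in Elo |]; lra. }
  destruct (IVT_interv (fun y => energy x y - c) lo hi) as [y [Hy Ey]]; try lra.
  { intros y Hy; apply continuity_pt_minus;
      [apply energy_continuous; lra | apply continuity_pt_const; intros u v; reflexivity]. }
  exists y; split; lra.
Qed.

Lemma energy_level_graph c : 0 < c -> exists f : R -> R,
  (forall x, 0 < f x) /\ (forall x1 x2, f x2 <= f x1 + Rabs (x2 - x1)) /\
  (forall x y, 0 < y -> (energy x y = c <-> y = f x)).
Proof.
  intro Hc.
  set (f := fun x => proj1_sig (constructive_indefinite_description _ (energy_level x c Hc))).
  assert (Hf : forall x, 0 < f x /\ energy x (f x) = c)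
    by (intro x; exact (proj2_sig (constructive_indefinite_description _ (energy_level x c Hc)))).
  assert (Hmono : forall x y1 y2, 0 < y1 < y2 -> energy x y1 < energy x y2)
    by (intros; apply vertical_increasing; [lia | lra]).
  exists f; split; [intro x; apply Hf | split].
  - intros x1 x2; destruct (Rle_lt_dec (f x2) (f x1 + Rabs (x2 - x1))) as [H | H]; [exact H |].
    destruct (Hf x1) as [H1 E1], (Hf x2) as [H2 E2].
    pose proof (energy_cone x1 x2 (f x1) H1).
    pose proof (Hmono x2 (f x1 + Rabs (x2 - x1)) (f x2) ltac:(pose proof (Rabs_pos (x2 - x1)); lra)).
    lra.
  - intros x y Hy; destruct (Hf x) as [Hfx Efx]; split; [intro Ey | intros ->; exact Efx].
    destruct (Rtotal_order y (f x)) as [H | [H | H]]; [| exact H |].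
    + pose proof (Hmono x y (f x) (conj Hy H)); lra.
    + pose proof (Hmono x (f x) y (conj Hfx H)); lra.
Qed.
End LevelCurves.

Theorem lemma4p1
  (phi phi1 phi2 : Cx -> Cx)
  (Hphi : forall z, in_H z -> has_cderiv phi z (phi1 z))
  (Hphi1 : forall z, in_H z -> has_cderiv phi1 z (phi2 z))
  (Hnz : forall z, in_H z -> phi1 z <> C0)
  (Hsup : exists M : R, M < 1 / 2 /\
     forall z, in_H z -> Im z * Cmod (Cdiv (phi2 z) (phi1 z)) <= M)
  (alpha : R) (Halpha : 0 < alpha) :
  exists f : R -> R,
    (forall x, 0 < f x) /\ Lipschitz f /\
    (forall x y : R, 0 < y ->
       (y * Cmod (phi1 (x, y)) = alpha <-> y = f x)).
Proof.
  destruct Hsup as [M [HM_half HM]].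
  destruct (energy_level_graph phi1 phi2 M Hphi1 Hnz HM HM_half (alpha ^ 2))
    as [f [Hpos [Hlip Hlevel]]]; [apply pow_lt; exact Halpha |].
  exists f; split; [exact Hpos | split].
  - exists 1; intros x1 x2; rewrite Rmult_1_l; apply Rabs_le.
    pose proof (Hlip x1 x2); pose proof (Hlip x2 x1); rewrite (Rabs_minus_sym x1 x2) in *; lra.
  - intros x y Hy; rewrite <- (Hlevel x y Hy), energy_height.
    assert (Hh : 0 <= y * Cmod (phi1 (x, y))) by (apply Rmult_le_pos; [lra | apply sqrt_pos]).
    split; [intros -> ; reflexivity |].
    intro E; apply Rsqr_inj; [exact Hh | lra | rewrite !Rsqr_pow2; exact E].
Qed.
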